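(* Let $\ell\ge 2$ be an integer and let $\mathbf{a}=(a_1,\ldots,a_\ell)\in\mathbf{Z}^\ell$ with $\sum_{j=1}^\ell a_j=0$. Put $\lambda=\pi_\ell(\mathbf{a})$ and $k=\lambda_1$ (so $\lambda\in\mathcal{C}_\ell^k$). Let $i$ be the largest index such that $a_i=\max\{a_1,\ldots,a_\ell\}$. Then \[ \pi_{\ell-1}^{-1}\big(\Phi_\ell^k(\lambda)\big)=\psi_{\ell-1}^{\,a_i}\big(a_1,\ldots,a_{i-1},a_{i+1},\ldots,a_\ell\big), \] where $\psi_{\ell-1}^{\,a_i}$ denotes the $a_i$-fold iterate of $\psi_{\ell-1}$ (note $a_i\ge 0$).
   Context: Partitions are drawn as Young diagrams in English notation; box $(x,y)$ lies in row $x$ and column $y$. The hook length $h^{\lambda}_{(a,c)}$ of a box $(a,c)$ of $\lambda$ is the number of boxes of $\lambda$ in row $a$ weakly to the right of $(a,c)$ plus the number of boxes of $\lambda$ in column $c$ strictly below $(a,c)$. For an integer $m\ge 1$, a partition is an $m$-core if no box has hook length divisible by $m$. $\mathcal{C}_m$ denotes the set of $m$-cores, $\mathcal{C}_m^k$ those with first part equal to $k$, and $\mathcal{C}_m^{\le k}$ those with first part $\le k$. For $m\ge1$ and $\mathbf{c}=(c_1,\ldots,c_m)\in\mathbf{Z}^m$ with $\sum c_j=0$, let $X(\mathbf{c})=\{rm+(j-1): 1\le j\le m,\ r\in\mathbf{Z},\ r\le c_j\}\subset\mathbf{Z}$, and let $\pi_m(\mathbf{c})$ be the partition whose nonzero parts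 (in weakly decreasing order) are the positive values among the numbers $\#\{y\in\mathbf{Z}\setminus X(\mathbf{c}): y<x\}$, $x\in X(\mathbf{c})$. It is known that $\pi_m$ is a bijection from $\{\mathbf{c}\in\mathbf{Z}^m:\sum c_j=0\}$ onto $\mathcal{C}_m$. For $\lambda\in\mathcal{C}_\ell^k$, $\Phi_\ell^k(\lambda)$ is the partition obtained from the Young diagram of $\lambda$ by deleting every row $x$ with $h^\lambda_{(x,1)}\equiv h^\lambda_{(1,1)}\pmod{\ell}$ (in particular row 1); it is known that $\Phi_\ell^k$ is a bijection $\mathcal{C}_\ell^k\to\mathcal{C}_{\ell-1}^{\le k}$. For $m\ge1$, $\psi_m:\mathbf{Z}^m\to\mathbf{Z}^m$ is the map $\psi_m(c_1,\ldots,c_m)=(c_m+1,c_1,c_2,\ldots,c_{m-1})$. *)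

From mathcomp Require Import all_boot all_order all_algebra.
Set Implicit Arguments. Unset Strict Implicit. Unset Printing Implicit Defensive.
Import Order.TTheory GRing.Theory Num.Theory.

(* Partitions are sequences of nat (parts, weakly decreasing, positive).
   Rows and columns are 1-indexed as in the paper: row x of lam has
   length nth 0 lam x.-1. *)

(* Vectors c = (c_1,...,c_m) in Z^m are sequences of int of size m;
   c_j is nth 0 c (j-1). *)

Local Open Scope ring_scope.

(* y \in X(c) = { r m + (j-1) : 1 <= j <= m, r <= c_j }  (0-based j here) *)
Definition inX (m : nat) (c : seq int) (y : int) : bool :=
  has (fun j : nat => ((m%:Z %| y - j%:Z)%Z && ((y - j%:Z) %/ m%:Z <= nth 0 c j)%Z))
      (iota 0 m).

(* Window bounds: every integer < lowX is in X(c) (it is <= m * min_j c_j),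
   and every integer >= upX is outside X(c). Hence for x in X(c) the count
   #{y notin X(c) : y < x} equals the count over the finite window [lowX, x),
   and only x in [lowX, upX) can give a positive count. *)
Definition sabs (c : seq int) : int := foldr (fun z acc => `|z| + acc) 0 c.
Definition lowX (m : nat) (c : seq int) : int := - (m%:Z * sabs c).
Definition upX (m : nat) (c : seq int) : int := m%:Z * sabs c + m%:Z.

Definition zrange (L U : int) : seq int :=
  [seq L + i%:Z | i <- iota 0 `|U - L|%N].

Definition gapcount (m : nat) (c : seq int) (x : int) : nat :=
  count (fun y => ~~ inX m c y) (zrange (lowX m c) x).

Definition piM (m : nat) (c : seq int) : seq nat :=
  sort geq [seq n <- [seq gapcount m c x | x <- zrange (lowX m c) (upX m c) & inX m c x]
           | (0 < n)%N].

Local Close Scope ring_scope.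

(* hook length of box (a, c) (1-indexed) of lam:
   boxes in row a weakly right of (a,c) + boxes in column c strictly below *)
Definition hook (lam : seq nat) (a c : nat) : nat :=
  (nth 0 lam a.-1 - c + 1) + count (fun r => c <= r) (drop a lam).

(* Phi_l^k(lam): delete every row x with h_(x,1) = h_(1,1) mod l.
   (The construction does not depend on k = lam_1 beyond the domain.) *)
Definition Phi (l : nat) (lam : seq nat) : seq nat :=
  [seq nth 0 lam x.-1 | x <- iota 1 (size lam)
     & hook lam x 1 != hook lam 1 1 %[mod l]].

Definition psi (c : seq int) : seq int :=
  match c with
  | [::] => [::]
  | x :: s => (last x s + 1)%R :: belast x s
  end.

(* Place X(a) on an abacus with l runners, runner j holding the positions
   congruent to j.  The parts of pi_l(a) are the gap counts of the beads
   preceded by a gap, and the first-column hook length of the row of a bead b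
   is b minus a constant; so Phi_l deletes exactly the rows whose beads lie on
   the runner of the top bead.  As a_i is the last maximal entry, the top bead
   is a_i l + i, on runner i, and every position of runner i below it is
   occupied.  Deleting runner i and closing up the others (skipres) maps
   X(psi^(a_i)(a without a_i)) onto X(a) minus runner i; since only occupied
   positions are jumped over, gap counts are preserved, so the remaining beads
   give exactly the parts of Phi_l(pi_l(a)). *)

From mathcomp Require Import all_boot all_order all_algebra.
Import Order.TTheory GRing.Theory Num.Theory.
From mathcomp Require Import zify.
Set Implicit Arguments. Unset Strict Implicit. Unset Printing Implicit Defensive.
Local Open Scope ring_scope.

Lemma int_ind_ge (L : int) (Q : int -> Prop) :
  Q L -> (forall U, L <= U -> Q U -> Q (U + 1)) -> forall U, L <= U -> Q U.
Proof.
move=> QL QS U LU; have -> : U = L + (`|U - L|%N)%:Z by lia.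
elim: `|U - L|%N => [|n IHn]; first by rewrite addr0.
have -> : L + n.+1%:Z = (L + n%:Z) + 1 by lia.
by apply: QS => //; lia.
Qed.

Lemma zrange_nil L : zrange L L = [::].
Proof. by rewrite /zrange subrr. Qed.

Lemma zrangeSr L U : L <= U -> zrange L (U + 1) = rcons (zrange L U) U.
Proof.
move=> LU; rewrite /zrange.
have -> : absz (U + 1 - L)%R = (absz (U - L)%R).+1 by lia.
rewrite -addn1 iotaD map_cat add0n /= cats1; congr rcons; lia.
Qed.

Lemma size_zrange L U : size (zrange L U) = `|U - L|%N.
Proof. by rewrite size_map size_iota. Qed.

Lemma mem_zrange L U x : L <= U -> (x \in zrange L U) = (L <= x < U).
Proof.
move: U; apply: int_ind_ge => [|U LU IHU]; first by rewrite zrange_nil in_nil; lia.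
by rewrite zrangeSr // mem_rcons in_cons IHU; case: eqP => [->|] /=; lia.
Qed.

Lemma zrange_cat L M U : L <= M -> M <= U -> zrange L U = zrange L M ++ zrange M U.
Proof.
move=> LM; move: U; apply: int_ind_ge => [|U MU IHU]; first by rewrite zrange_nil cats0.
by rewrite !zrangeSr ?IHU ?rcons_cat //; lia.
Qed.

Lemma sorted_zrange L U : sorted <%R (zrange L U).
Proof.
rewrite /zrange sorted_map.
by apply: sub_sorted (iota_ltn_sorted 0 _) => x y /=; lia.
Qed.

Section Gaps.

Variable P : pred int.

(* For [P = inX m c] and [L = lowX m c] this is [gapcount m c x]. *)
Definition gaps (L x : int) : nat := count (predC P) (zrange L x).

Lemma gapsSr L x : L <= x -> gaps L (x + 1) = (gaps L x + ~~ P x)%N.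
Proof. by move=> Lx; rewrite /gaps zrangeSr // -cats1 count_cat /= addn0. Qed.

Lemma gaps_cat L M x : L <= M -> M <= x -> gaps L x = (gaps L M + gaps M x)%N.
Proof. by move=> LM Mx; rewrite /gaps (zrange_cat LM Mx) count_cat. Qed.

Lemma gaps_eq0 L x : L <= x -> (forall y, L <= y < x -> P y) -> gaps L x = 0%N.
Proof.
move=> Lx Pin; apply/eqP; rewrite -leqn0 leqNgt -has_count; apply/hasPn => y.
by rewrite mem_zrange // => /Pin /= ->.
Qed.

Lemma leq_gaps L x y : L <= x -> x <= y -> (gaps L x <= gaps L y)%N.
Proof. by move=> Lx xy; rewrite (gaps_cat Lx xy) leq_addr. Qed.

Lemma gaps_lowered L' L x : L' <= L -> L <= x ->
  (forall y, L' <= y < L -> P y) -> gaps L x = gaps L' x.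
Proof. by move=> L'L Lx Pin; rewrite (gaps_cat L'L Lx) (gaps_eq0 L'L Pin). Qed.

Definition beads (L U : int) : seq int :=
  [seq x <- zrange L U | P x && (0 < gaps L x)%N].

Lemma sorted_beads L U : sorted <%R (beads L U).
Proof. exact: lt_sorted_filter (sorted_zrange L U). Qed.

Lemma mem_beads L U x : L <= U ->
  (x \in beads L U) = [&& L <= x < U, P x & (0 < gaps L x)%N].
Proof. by move=> LU; rewrite mem_filter mem_zrange // andbC. Qed.

Lemma sorted_gaps_beads L U : L <= U -> sorted leq (map (gaps L) (beads L U)).
Proof.
move=> LU; apply: (homo_sorted_in (P := [pred x | L <= x]) (e := <%R)).
- by move=> x y /= Lx _ /ltW; apply: leq_gaps.
- by apply/allP => x; rewrite mem_beads // => /and3P[/andP[]].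
- exact: sorted_beads.
Qed.

(* The gaps, the beads below [b] and the points of [P] preceding every gap
   partition [[L, b)]; the left side is the first-column hook length of the
   row given by [b]. *)
Lemma gaps_add_beads_below L U b : L <= U -> b \in beads L U ->
  (gaps L b + count (< b) (beads L U))%N%:Z =
  b - L - (count (fun y => P y && (gaps L y == 0%N)) (zrange L U))%:Z.
Proof.
move=> LU; rewrite mem_beads // => /and3P[/andP[Lb bU] _ gaps_b].
have splitU := zrange_cat Lb (ltW bU).
have below : count (< b) (beads L U) =
             count (fun x => P x && (0 < gaps L x)%N) (zrange L b).
  rewrite /beads splitU filter_cat count_cat !count_filter.
  rewrite [X in (_ + X)%N](@eq_in_count _ _ pred0) ?count_pred0 ?addn0; last first.
    by move=> y; rewrite mem_zrange ?(ltW bU) //= => /andP[le_by _]; rewrite ltNge le_by.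
  by apply: eq_in_count => y; rewrite mem_zrange //= => /andP[_ ->].
have frozen : count (fun y => P y && (gaps L y == 0%N)) (zrange L U) =
              count (fun y => P y && (gaps L y == 0%N)) (zrange L b).
  rewrite splitU count_cat (@eq_in_count _ _ pred0 (zrange b U)) ?count_pred0 ?addn0 //.
  move=> y; rewrite mem_zrange ?(ltW bU) // => /andP[le_by _] /=.
  by have := leq_gaps Lb le_by; case: (gaps L y) => /= [|n]; rewrite ?andbF /=; lia.
have parts : (gaps L b + count (fun x => P x && (0 < gaps L x)%N) (zrange L b) +
    count (fun y => P y && (gaps L y == 0%N)) (zrange L b))%N = size (zrange L b).
  rewrite {1}/gaps; elim: (zrange L b) => //= y s IH.
  by case: (P y); case: (gaps L y) => /= *; lia.
by move: parts; rewrite size_zrange below frozen; lia.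
Qed.

End Gaps.

Lemma sort_geq_rev (s : seq nat) : sorted leq s -> sort geq s = rev s.
Proof.
have geq_trans : transitive geq by move=> x y z /= yx zy; apply: leq_trans zy yx.
have geq_total : total geq by move=> x y; apply: leq_total.
have geq_anti : antisymmetric geq by move=> x y /andP[yx xy]; apply/eqP; rewrite eqn_leq; apply/andP.
have rev_perm : perm_eq (rev s) s by rewrite perm_rev.
move=> s_sorted; rewrite -(perm_sortP geq_total geq_trans geq_anti _ _ rev_perm).
by rewrite sorted_sort // rev_sorted.
Qed.

Lemma map_nth_iota_filter (T U : Type) (x0 : T) (f : T -> U) (p : pred T) (s : seq T) :
  [seq f (nth x0 s k) | k <- iota 0 (size s) & p (nth x0 s k)] = map f (filter p s).
Proof. by rewrite -[in RHS](mkseq_nth x0 s) /mkseq filter_map -map_comp. Qed.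

Lemma hook_first_column (lam : seq nat) k : all (fun r => 0 < r)%N lam ->
  (k < size lam)%N -> hook lam k.+1 1 = (nth 0 lam k + (size lam - k.+1))%N.
Proof.
move=> lam_pos k_lt; rewrite /hook /=.
have: (0 < nth 0 lam k)%N by apply: (allP lam_pos); rewrite mem_nth.
have /eqP-> : count (fun r => 1 <= r)%N (drop k.+1 lam) == size (drop k.+1 lam).
  by move: lam_pos; rewrite -all_count -[in all _ lam](cat_take_drop k.+1 lam) all_cat => /andP[].
by rewrite size_drop; lia.
Qed.

Lemma natmod_dvdz (d m n : nat) : (m == n %[mod d])%N = (d%:Z %| m%:Z - n%:Z)%Z.
Proof. by rewrite -eqz_mod_dvd !modz_nat eqz_nat. Qed.

(* The left side of the second hypothesis is the first-column hook length of
   row [k.+1] of [map g t]. *)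
Lemma Phi_map (l : nat) (g : int -> nat) (t : seq int) (K : int) :
  all (fun x => 0 < g x)%N t ->
  (forall k, (k < size t)%N -> (g (nth 0%R t k) + (size t - k.+1))%N%:Z = nth 0 t k + K) ->
  Phi l (map g t) = map g [seq x <- t | ~~ (l%:Z %| x - nth 0 t 0)%Z].
Proof.
move=> g_pos hookE; have lam_pos : all (fun r => 0 < r)%N (map g t) by rewrite all_map.
rewrite -(map_nth_iota_filter (0 : int) g) /Phi size_map (iotaDl 1 0) filter_map -map_comp.
have keep_rows : {in iota 0 (size t), forall k,
    (hook (map g t) k.+1 1 != hook (map g t) 1 1 %[mod l]) = ~~ (l%:Z %| nth 0 t k - nth 0 t 0)%Z}.
  move=> k; rewrite mem_iota add0n => k_lt.
  have t_ne : (0 < size t)%N by lia.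
  rewrite !hook_first_column ?size_map // !(nth_map 0) // natmod_dvdz !hookE //.
  by rewrite opprD addrACA subrr addr0.
rewrite (eq_in_filter keep_rows); apply/eq_in_map => k.
by rewrite mem_filter mem_iota add0n => /andP[_ k_lt] /=; rewrite (nth_map 0).
Qed.

Lemma Phi_beads (P : pred int) L U l : L <= U ->
  Phi l (rev (map (gaps P L) (beads P L U))) =
  rev (map (gaps P L) [seq b <- beads P L U | ~~ (l%:Z %| b - last 0 (beads P L U))%Z]).
Proof.
move=> LU; set B := beads P L U; set E := count (fun y => P y && (gaps P L y == 0%N)) (zrange L U).
have B_sorted : sorted <%R B := sorted_beads P L U.
rewrite -!map_rev -[in RHS]filter_rev (@Phi_map _ _ _ (- L - E%:Z)); first last.
- move=> k; rewrite size_rev => k_lt; rewrite nth_rev //.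
  have j_lt : (size B - k.+1 < size B)%N.
    by rewrite ltn_subrL (leq_ltn_trans (leq0n k) k_lt).
  have := gaps_add_beads_below LU (mem_nth 0 j_lt).
  by rewrite (count_lt_nth 0 B_sorted j_lt) -/E => ->; rewrite addrA.
- by apply/allP => b; rewrite mem_rev mem_beads // => /and3P[].
case: (B =P [::]) => [-> //|B_ne].
by rewrite nth_rev ?subn1 ?nth_last // lt0n size_eq0; apply/eqP.
Qed.

Lemma divz_modz_small (m q r : int) : 0 < m -> 0 <= r < m ->
  ((q * m + r) %/ m)%Z = q /\ ((q * m + r) %% m)%Z = r.
Proof.
move=> m_gt0 r_bnd; have m_neq0 : m != 0 by lia.
split; first by rewrite divzMDl // divz_small ?addr0 //; lia.
by rewrite modzMDl modz_small.
Qed.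

Lemma int_divmodP (m y : int) : 0 < m -> exists q r,
  [/\ y = q * m + r, 0 <= r < m, (y %/ m)%Z = q & (y %% m)%Z = r].
Proof.
move=> m_gt0; exists (y %/ m)%Z, (y %% m)%Z; split => //; first exact: divz_eq.
by rewrite ltz_pmod // modz_ge0 //; lia.
Qed.

Lemma modz_small_add (l : nat) (q : int) (r : nat) : (r < l)%N ->
  ((q * l%:Z + r%:Z) %% l%:Z)%Z = r%:Z.
Proof. by move=> r_lt; have [_ ->] := @divz_modz_small l%:Z q r%:Z ltac:(lia) ltac:(lia). Qed.

Lemma inXE (m : nat) (c : seq int) (y : int) : (0 < m)%N ->
  inX m c y = ((y %/ m%:Z)%Z <= nth 0 c `|(y %% m%:Z)%Z|%N).
Proof.
move=> m_gt0; have m_gt0' : 0 < m%:Z by lia.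
have [q [r [-> r_bnd -> ->]]] := int_divmodP y m_gt0'.
rewrite /inX; apply/hasP/idP => [[j]|le_q].
- rewrite mem_iota add0n => /andP[_ j_lt] /andP[/dvdzP[k k_eq] le_k].
  rewrite k_eq mulzK in le_k; last by lia.
  have [q_div r_mod] := divz_modz_small q m_gt0' r_bnd.
  have [k_div j_mod] := @divz_modz_small m%:Z k j%:Z m_gt0' ltac:(lia).
  have e : q * m%:Z + r = k * m%:Z + j%:Z by lia.
  have -> : q = k by rewrite -q_div e k_div.
  by have -> : r = j%:Z by rewrite -r_mod e j_mod.
- exists `|r|%N; first by rewrite mem_iota add0n; lia.
  have -> : q * m%:Z + r - `|r|%N%:Z = q * m%:Z by lia.
  by rewrite dvdz_mull ?dvdzz // mulzK //; lia.
Qed.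

Lemma sabs_cons x c : sabs (x :: c) = `|x| + sabs c.
Proof. by []. Qed.

Lemma sabs_ge0 c : 0 <= sabs c.
Proof. by elim: c => // x s; rewrite sabs_cons; lia. Qed.

Lemma sabs_nth c j : - sabs c <= nth 0 c j <= sabs c.
Proof.
elim: c j => [|x s IHs] j; first by rewrite nth_nil oppr0 lexx.
rewrite sabs_cons; case: j => [|j].
- by change (nth 0 (x :: s) 0) with x; have := sabs_ge0 s; lia.
- by change (nth 0 (x :: s) j.+1) with (nth 0 s j); have := IHs j; lia.
Qed.

Lemma inX_lt_lowX m c y : (0 < m)%N -> y < lowX m c -> inX m c y.
Proof.
move=> m_gt0 y_lt; rewrite inXE //; have m_gt0' : 0 < m%:Z by lia.
have [q [r [y_eq r_bnd -> ->]]] := int_divmodP y m_gt0'.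
have := sabs_nth c `|r|%N; move: y_lt; rewrite /lowX y_eq => y_lt c_bnd.
have : (q + sabs c) * m%:Z < 0 by lia.
by rewrite pmulr_llt0 //; lia.
Qed.

Lemma notin_X_ge_upX m c y : (0 < m)%N -> upX m c <= y -> ~~ inX m c y.
Proof.
move=> m_gt0 y_ge; rewrite inXE // -ltNge; have m_gt0' : 0 < m%:Z by lia.
have [q [r [y_eq r_bnd -> ->]]] := int_divmodP y m_gt0'.
have := sabs_nth c `|r|%N; move: y_ge; rewrite /upX y_eq => y_ge c_bnd.
have : 0 < (q - sabs c) * m%:Z by lia.
by rewrite pmulr_lgt0 //; lia.
Qed.

Lemma lowX_le0 m c : lowX m c <= 0.
Proof. by have := sabs_ge0 c; rewrite /lowX; nia. Qed.

Lemma upX_ge0 m c : 0 <= upX m c.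
Proof. by have := sabs_ge0 c; rewrite /upX; nia. Qed.

Lemma lowX_le_upX m c : lowX m c <= upX m c.
Proof. by have := lowX_le0 m c; have := upX_ge0 m c; lia. Qed.

(* The beads of [X(c)] carry weakly increasing gap counts, so [pi_m(c)] lists
   them from the top bead down. *)
Lemma piM_beads m c :
  piM m c = rev (map (gaps (inX m c) (lowX m c)) (beads (inX m c) (lowX m c) (upX m c))).
Proof.
rewrite -sort_geq_rev ?sorted_gaps_beads ?lowX_le_upX // /piM /beads filter_map -filter_predI.
by congr (sort _ (map _ _)); apply: eq_filter => x /=; rewrite andbC.
Qed.

Lemma size_psi c : size (psi c) = size c.
Proof. by case: c => //= x s; rewrite size_belast. Qed.

Lemma size_iter_psi k c : size (iter k psi c) = size c.
Proof. by elim: k => //= k <-; rewrite size_psi. Qed.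

Lemma sum_psi c : c != [::] -> \sum_(x <- psi c) x = \sum_(x <- c) x + 1.
Proof. by case: c => // x s _; rewrite big_cons (lastI x s) big_rcons /= [LHS]addrC addrA. Qed.

Lemma sum_iter_psi k c : c != [::] -> \sum_(x <- iter k psi c) x = \sum_(x <- c) x + k%:Z.
Proof.
move=> c_ne; elim: k => [|k IHk]; first by rewrite addr0.
by rewrite iterS sum_psi ?IHk -?size_eq0 ?size_iter_psi ?size_eq0 //; lia.
Qed.

Lemma nth_psi c j : (j < size c)%N ->
  nth 0 (psi c) j = if j == 0%N then last 0 c + 1 else nth 0 c j.-1.
Proof.
case: c => // x s; case: j => //= j j_lt.
by rewrite (lastI x s) nth_rcons size_belast -ltnS j_lt.
Qed.

Lemma inX_psi m c y : size c = m -> (0 < m)%N -> inX m (psi c) y = inX m c (y - 1).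
Proof.
move=> c_size m_gt0; rewrite !inXE //; have m_gt0' : 0 < m%:Z by lia.
have [q [r [-> r_bnd -> ->]]] := int_divmodP y m_gt0'.
rewrite nth_psi; last by rewrite c_size; lia.
case: eqP => r0.
- have -> : q * m%:Z + r - 1 = (q - 1) * m%:Z + (m%:Z - 1) by lia.
  have [-> ->] := @divz_modz_small m%:Z (q - 1) (m%:Z - 1) m_gt0' ltac:(lia).
  have -> : `|m%:Z - 1|%N = m.-1 by lia.
  rewrite -nth_last c_size; lia.
- have -> : q * m%:Z + r - 1 = q * m%:Z + (r - 1) by lia.
  have [-> ->] := @divz_modz_small m%:Z q (r - 1) m_gt0' ltac:(lia).
  by have -> : `|r - 1|%N = `|r|.-1 by lia.
Qed.

Lemma inX_iter_psi m c k y : size c = m -> (0 < m)%N ->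
  inX m (iter k psi c) y = inX m c (y - k%:Z).
Proof.
move=> c_size m_gt0; elim: k y => [|k IHk] y; first by rewrite subr0.
rewrite iterS inX_psi ?size_iter_psi // IHk; congr inX; lia.
Qed.

Definition delete_at (i : nat) (a : seq int) : seq int := take i a ++ drop i.+1 a.

Lemma size_delete_at i a : (i < size a)%N -> size (delete_at i a) = (size a).-1.
Proof. by move=> i_lt; rewrite size_cat size_take size_drop i_lt; lia. Qed.

Lemma sum_delete_at i a : (i < size a)%N ->
  \sum_(x <- a) x = \sum_(x <- delete_at i a) x + nth 0 a i.
Proof.
move=> i_lt; rewrite -{1}(cat_take_drop i a) (drop_nth 0 i_lt) !big_cat big_cons.
by rewrite -addrA [_ + nth 0 a i]addrC.
Qed.

Lemma nat_divmodP (m : nat) (w : int) : (0 < m)%N ->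
  exists q (r : nat), w = q * m%:Z + r%:Z /\ (r < m)%N.
Proof.
move=> m_gt0; have [q [r [w_eq r_bnd _ _]]] := @int_divmodP m%:Z w ltac:(lia).
by exists q, `|r|%N; split; lia.
Qed.

Section SkipResidue.

Variables l i : nat.
Hypotheses (l_ge2 : (2 <= l)%N) (i_lt : (i < l)%N).

Let l_gt0 : (0 < l)%N. Proof. by lia. Qed.
Let l1_gt0 : (0 < l.-1)%N. Proof. by lia. Qed.

(* The increasing bijection from [Z] onto the integers not congruent to [i]
   modulo [l]: on abaci, [l - 1] runners are spread over [l] runners, leaving
   runner [i] empty. *)
Definition skipres (w : int) : int :=
  (w %/ l.-1)%Z * l%:Z + (bump i `|(w %% l.-1)%Z|%N)%:Z.

Lemma bump_lt (r : nat) : (r < l.-1)%N -> (bump i r < l)%N.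
Proof. by rewrite /bump; case: leqP; lia. Qed.

Lemma skipresE q (r : nat) : (r < l.-1)%N ->
  skipres (q * l.-1%:Z + r%:Z) = q * l%:Z + (bump i r)%:Z.
Proof.
move=> r_lt; rewrite /skipres.
by have [-> ->] := @divz_modz_small l.-1%:Z q r%:Z ltac:(lia) ltac:(lia).
Qed.

Lemma skipres_mod w : (skipres w %% l%:Z)%Z != i%:Z.
Proof.
have [q [r [-> r_lt]]] := nat_divmodP w l1_gt0.
rewrite skipresE // modz_small_add ?bump_lt // eqz_nat /bump.
by case: leqP; lia.
Qed.

Lemma skipres_surj x : (x %% l%:Z)%Z != i%:Z -> exists w, skipres w = x.
Proof.
have [q [r [-> r_lt]]] := nat_divmodP x l_gt0.
rewrite modz_small_add // eqz_nat => r_neq.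
have [r_lt_i|i_lt_r] := ltnP r i.
- exists (q * l.-1%:Z + r%:Z); rewrite skipresE; last by lia.
  by rewrite /bump leqNgt r_lt_i.
- exists (q * l.-1%:Z + r.-1%:Z); rewrite skipresE; last by lia.
  by congr (_ + _); rewrite /bump; case: leqP; lia.
Qed.

Lemma skipres_step w :
  skipres (w + 1) = skipres w + 1 \/
  skipres (w + 1) = skipres w + 2 /\ ((skipres w + 1) %% l%:Z)%Z = i%:Z.
Proof.
have [q [r [-> r_lt]]] := nat_divmodP w l1_gt0.
rewrite skipresE //.
have [r1_lt|r1_ge] := ltnP r.+1 l.-1.
  have -> : q * l.-1%:Z + r%:Z + 1 = q * l.-1%:Z + r.+1%:Z by lia.
  rewrite skipresE //; have [i_eq|i_neq] := eqVneq i r.+1.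
  - right; rewrite /bump i_eq leqnn ltnn /=; split; first lia.
    by rewrite (_ : _ + 1 = q * l%:Z + i%:Z) ?modz_small_add //; lia.
  - by left; rewrite /bump; case: leqP; case: leqP; lia.
have -> : q * l.-1%:Z + r%:Z + 1 = (q + 1) * l.-1%:Z + 0%N%:Z.
  by rewrite mulrDl mul1r; lia.
rewrite skipresE // mulrDl mul1r.
have [i0|i_gt0] := posnP i.
  right; rewrite /bump i0 /=; split; first lia.
  by rewrite (_ : _ + 1 = (q + 1) * l%:Z + 0%N%:Z) ?modz_small_add // mulrDl mul1r; lia.
have [i_top|i_lt_top] := eqVneq i l.-1.
- have r_lt_i : (r < i)%N by lia.
  right; rewrite /bump (leqNgt i 0) (leqNgt i r) i_gt0 r_lt_i /=; split; first lia.
  by rewrite (_ : _ + 1 = q * l%:Z + i%:Z) ?modz_small_add //; lia.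
- by left; rewrite /bump; case: leqP; case: leqP; lia.
Qed.

Lemma skipres_lt w w' : w < w' -> skipres w < skipres w'.
Proof.
move=> lt_ww'; have : w + 1 <= w' by lia.
clear lt_ww'; move: w'; apply: int_ind_ge => [|u _ IHu].
- by case: (skipres_step w) => [|[]] ->; lia.
- by case: (skipres_step u) => [|[]] ->; lia.
Qed.

Lemma skipres_le_neg w : w < 0 -> skipres w <= w.
Proof.
have [q [r [-> r_lt]]] := nat_divmodP w l1_gt0.
move=> w_lt0; rewrite skipresE //.
have q_lt0 : q < 0 by rewrite -(@pmulr_llt0 _ l.-1%:Z); lia.
have -> : l%:Z = l.-1%:Z + 1 by lia.
by rewrite mulrDr mulr1 /bump; case: leqP; lia.
Qed.

Lemma inX_delete_at a w : size a = l ->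
  inX l.-1 (delete_at i a) w = inX l a (skipres w).
Proof.
move=> a_size; rewrite !inXE; try lia.
have [q [r [-> r_lt]]] := nat_divmodP w l1_gt0.
have [-> ->] := @divz_modz_small l.-1%:Z q r%:Z ltac:(lia) ltac:(lia).
rewrite skipresE //.
have [-> ->] := @divz_modz_small l%:Z q (bump i r)%:Z ltac:(lia) ltac:(have := bump_lt r_lt; lia).
rewrite /delete_at nth_cat size_take a_size i_lt /bump /=.
case: leqP => [i_le_r|r_lt_i]; last by rewrite nth_take.
by rewrite nth_drop; congr (_ <= nth _ _ _); lia.
Qed.

End SkipResidue.

Lemma le_last_sorted (s : seq int) x : sorted <%R s -> x \in s -> x <= last 0 s.
Proof.
move=> s_sorted /(nthP 0)[k k_lt <-]; rewrite -nth_last.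
rewrite (lt_sorted_leq_nth 0 s_sorted) ?inE //.
all: by move: k_lt; case: (size s) => // n; rewrite ltnS /=; lia.
Qed.

Lemma sum_le_max (a : seq int) M : (forall x, x \in a -> x <= M) ->
  \sum_(x <- a) x <= (size a)%:Z * M.
Proof.
elim: a => [|x a IHa] a_le; first by rewrite big_nil mul0r.
rewrite big_cons /= -addn1 PoszD mulrDl mul1r addrC lerD ?IHa ?a_le ?mem_head //.
by move=> y y_in; apply: a_le; rewrite inE y_in orbT.
Qed.

Lemma gaps_transfer (P Q : pred int) (phi : int -> int) (l i : nat) (B top : int) :
  (forall z, Q z = P (phi z)) ->
  (forall z, phi (z + 1) = phi z + 1 \/
             phi (z + 1) = phi z + 2 /\ ((phi z + 1) %% l%:Z)%Z = i%:Z) ->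
  (forall y, (y %% l%:Z)%Z = i%:Z -> y <= top -> P y) ->
  forall z, B <= z -> phi z <= top + 1 -> gaps Q B z = gaps P (phi B) (phi z).
Proof.
move=> QE phi_step P_res.
have phi_mono : forall z, B <= z -> phi B <= phi z.
  by apply: int_ind_ge => // z _ IHz; case: (phi_step z) => [|[]] ->; lia.
apply: int_ind_ge => [|z Bz IHz] phi_le; first by rewrite /gaps !zrange_nil.
have phi_lt : phi z < phi (z + 1) by case: (phi_step z) => [|[]] ->; lia.
rewrite gapsSr // IHz; last lia.
case: (phi_step z) => [step|[step res_z]]; rewrite step in phi_le *.
  by rewrite gapsSr ?QE ?phi_mono.
rewrite (_ : phi z + 2 = phi z + 1 + 1); last lia.
rewrite gapsSr; last by have := phi_mono z Bz; lia.
by rewrite gapsSr ?phi_mono // QE (P_res _ res_z) ?addn0 //; lia.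
Qed.

Section DeleteLastMaximalRunner.

Variables (l : nat) (a : seq int) (i : nat).
Hypotheses (l_ge2 : (2 <= l)%N) (a_size : size a = l) (i_lt : (i < l)%N)
  (a_sum0 : \sum_(x <- a) x = 0)
  (le_max : forall j, (j < l)%N -> nth 0 a j <= nth 0 a i)
  (lt_max : forall j, (i < j < l)%N -> nth 0 a j < nth 0 a i).

Local Notation M := (nth 0 a i).
Local Notation c := (iter `|M|%N psi (delete_at i a)).
Local Notation P := (inX l a).
Local Notation Q := (inX l.-1 c).
(* The top bead of [X(a)], on runner [i]. *)
Local Notation top := (M * l%:Z + i%:Z).

Let l_gt0 : (0 < l)%N. Proof. by lia. Qed.
Let l1_gt0 : (0 < l.-1)%N. Proof. by lia. Qed.

Lemma nth_max_ge0 : 0 <= M.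
Proof.
have le_M : forall x, x \in a -> x <= M.
  by move=> x /(nthP 0)[j j_lt <-]; apply: le_max; rewrite -a_size.
by have := sum_le_max le_M; rewrite a_sum0 a_size pmulr_rge0 //; lia.
Qed.

Lemma size_delete : size (delete_at i a) = l.-1.
Proof. by rewrite size_delete_at a_size. Qed.

Lemma sum_psi_delete_at : \sum_(x <- c) x = 0.
Proof.
have := @sum_delete_at i a; rewrite a_size => /(_ i_lt).
rewrite a_sum0 sum_iter_psi -?size_eq0 ?size_delete; last by lia.
by move=> /esym; rewrite gez0_abs // nth_max_ge0.
Qed.

(* Positions of [X(c)] go to the runners of [X(a)] other than [i]; the shift
   by [M] undoes [psi^M]. *)
Definition liftX (z : int) : int := skipres l i (z - M).

Lemma liftX_step z : liftX (z + 1) = liftX z + 1 \/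
  liftX (z + 1) = liftX z + 2 /\ ((liftX z + 1) %% l%:Z)%Z = i%:Z.
Proof. by rewrite /liftX (_ : z + 1 - M = z - M + 1); [apply: skipres_step | lia]. Qed.

Lemma liftX_lt z z' : z < z' -> liftX z < liftX z'.
Proof. by move=> lt_zz'; apply: skipres_lt => //; lia. Qed.

Lemma inX_c_liftX z : Q z = P (liftX z).
Proof.
rewrite inX_iter_psi ?size_delete // inX_delete_at //.
by congr (inX _ _ (skipres _ _ _)); have := nth_max_ge0; lia.
Qed.

Lemma inX_le_top y : P y -> y <= top.
Proof.
rewrite inXE //; have l_gt0' : 0 < l%:Z by lia.
have [q [r [-> r_bnd -> ->]]] := int_divmodP y l_gt0'.
have [r_le_i|i_lt_r] := leqP `|r|%N i => le_q.
- have : q <= M by apply: le_trans le_q (le_max _); lia.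
  by rewrite -(ler_pM2r l_gt0'); lia.
- have : q <= M - 1 by have := @lt_max `|r|%N; lia.
  by rewrite -(ler_pM2r l_gt0') mulrBl mul1r; lia.
Qed.

Lemma inX_res_top y : (y %% l%:Z)%Z = i%:Z -> y <= top -> P y.
Proof.
rewrite inXE //; have l_gt0' : 0 < l%:Z by lia.
have [q [r [-> r_bnd -> ->]]] := int_divmodP y l_gt0'.
move=> -> le_top; rewrite absz_nat -(ler_pM2r l_gt0'); lia.
Qed.

Lemma inX_top : P top.
Proof. by rewrite inX_res_top ?modz_small_add. Qed.

Local Notation L := (lowX l a).
Local Notation U := (upX l a).
Local Notation LQ := (lowX l.-1 c).
Local Notation UQ := (upX l.-1 c).
(* A common lower base for both windows, far enough down that [liftX base]
   lies below [L]. *)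
Local Notation base := (LQ + L - 1 - M).

Lemma liftX_le z z' : z <= z' -> liftX z <= liftX z'.
Proof. by rewrite le_eqVlt => /predU1P[->|/liftX_lt/ltW]. Qed.

Lemma liftX_base_le : liftX base <= L.
Proof.
have := lowX_le0 l.-1 c; have := lowX_le0 l a; have := nth_max_ge0 => *.
by apply: le_trans (skipres_le_neg _ _ _) _; lia.
Qed.

Lemma gaps_c_liftX_base z : base <= z -> liftX z <= top + 1 ->
  gaps Q base z = gaps P (liftX base) (liftX z).
Proof. exact: gaps_transfer inX_c_liftX liftX_step inX_res_top z. Qed.

Lemma gaps_c_base z : LQ <= z -> gaps Q LQ z = gaps Q base z.
Proof.
move=> LQ_z; apply: gaps_lowered => //; first by have := lowX_le0 l a; have := nth_max_ge0; lia.
by move=> y /andP[_ y_lt]; apply: inX_lt_lowX.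
Qed.

Lemma gaps_a_base x : L <= x -> gaps P L x = gaps P (liftX base) x.
Proof.
move=> L_x; apply: gaps_lowered liftX_base_le L_x _ => y /andP[_ y_lt].
exact: inX_lt_lowX.
Qed.

Lemma bead_c_liftX z : z \in beads Q LQ UQ ->
  L <= liftX z /\ gaps Q LQ z = gaps P L (liftX z).
Proof.
rewrite mem_beads ?lowX_le_upX // => /and3P[/andP[LQ_z _] Qz gaps_z].
have lift_z_le := inX_le_top (etrans (esym (inX_c_liftX z)) Qz).
have base_z : base <= z by have := lowX_le0 l a; have := nth_max_ge0; lia.
have gapsE : gaps Q LQ z = gaps P (liftX base) (liftX z).
  by rewrite gaps_c_base // gaps_c_liftX_base //; lia.
have L_lift_z : L <= liftX z.
  rewrite leNgt; apply/negP => lift_z_lt; move: gaps_z; rewrite gapsE gaps_eq0 //.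
  - by apply: liftX_le.
  - by move=> y /andP[_ y_lt]; apply: inX_lt_lowX => //; lia.
by rewrite gapsE gaps_a_base.
Qed.

Lemma mem_liftX_beads x : (x \in map liftX (beads Q LQ UQ)) =
  (x \in [seq b <- beads P L U | (b %% l%:Z)%Z != i%:Z]).
Proof.
apply/mapP/idP => [[z z_bead ->]|].
  have [L_lift gapsE] := bead_c_liftX z_bead.
  move: z_bead; rewrite mem_beads ?lowX_le_upX // inX_c_liftX => /and3P[_ P_lift gaps_z].
  rewrite mem_filter skipres_mod // mem_beads ?lowX_le_upX // P_lift -gapsE gaps_z L_lift /= andbT.
  by rewrite ltNge; apply/negP => /(notin_X_ge_upX l_gt0); rewrite P_lift.
rewrite mem_filter => /andP[x_res]; rewrite mem_beads ?lowX_le_upX //.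
case/and3P => /andP[L_x _] Px gaps_x.
have [w lift_w] := skipres_surj l_ge2 i_lt x_res.
have lift_z : liftX (w + M) = x by rewrite /liftX addrK.
exists (w + M) => //; have Qz : Q (w + M) by rewrite inX_c_liftX lift_z.
have base_z : base <= w + M.
  by rewrite leNgt; apply/negP => /liftX_lt; rewrite lift_z; have := liftX_base_le; lia.
have gapsE : gaps Q base (w + M) = gaps P L x.
  by rewrite gaps_c_liftX_base // lift_z ?gaps_a_base //; have := inX_le_top Px; lia.
have LQ_z : LQ <= w + M.
  rewrite leNgt; apply/negP => z_lt; move: gaps_x; rewrite -gapsE gaps_eq0 //.
  by move=> y /andP[_ y_lt]; apply: inX_lt_lowX => //; lia.
rewrite mem_beads ?lowX_le_upX // Qz gaps_c_base // gapsE gaps_x LQ_z /= andbT.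
by rewrite ltNge; apply/negP => /(notin_X_ge_upX l1_gt0); rewrite Qz.
Qed.

Lemma map_liftX_beads :
  map liftX (beads Q LQ UQ) = [seq b <- beads P L U | (b %% l%:Z)%Z != i%:Z].
Proof.
apply: (irr_sorted_eq lt_trans ltxx) mem_liftX_beads.
- by rewrite sorted_map; apply: sub_sorted (sorted_beads _ _ _) => z z' /liftX_lt.
- exact: lt_sorted_filter (sorted_beads _ _ _).
Qed.

Lemma last_beads : beads P L U != [::] -> last 0 (beads P L U) = top.
Proof.
move=> beads_ne; have last_in : last 0 (beads P L U) \in beads P L U.
  by case: (beads P L U) beads_ne => // b s _; exact: (mem_last b s).
apply/eqP; rewrite eq_le; apply/andP; split.
  by move: last_in; rewrite mem_beads ?lowX_le_upX // => /and3P[_ /inX_le_top].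
apply: le_last_sorted (sorted_beads _ _ _) _.
move: last_in; rewrite !mem_beads ?lowX_le_upX // inX_top /=.
case/and3P => /andP[L_b _] /inX_le_top b_le gaps_b.
rewrite (leq_trans gaps_b (leq_gaps _ L_b b_le)) (le_trans L_b b_le) andbT /=.
by rewrite ltNge; apply/negP => /(notin_X_ge_upX l_gt0); rewrite inX_top.
Qed.

Lemma filter_beads_last :
  [seq b <- beads P L U | ~~ (l%:Z %| b - last 0 (beads P L U))%Z] =
  [seq b <- beads P L U | (b %% l%:Z)%Z != i%:Z].
Proof.
have [->//|beads_ne] := eqVneq (beads P L U) [::].
apply: eq_filter => b; rewrite last_beads // -eqz_mod_dvd.
by rewrite [(top %% _)%Z]modz_small_add.
Qed.

Lemma piM_delete_at : piM l.-1 c = Phi l (piM l a).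
Proof.
rewrite !piM_beads Phi_beads ?lowX_le_upX // filter_beads_last -map_liftX_beads -map_comp.
by congr rev; apply/eq_in_map => z /bead_c_liftX[].
Qed.

End DeleteLastMaximalRunner.

Local Close Scope ring_scope.

(* [i] is 0-based: the paper's index is [i + 1]. *)
Theorem mainTheorem1 (l : nat) (a : seq int) (i : nat) :
  (2 <= l)%N -> size a = l -> (\sum_(x <- a) x = 0)%R ->
  (i < l)%N ->
  (forall j, (j < l)%N -> (nth 0%R a j <= nth 0%R a i)%R) ->
  (forall j, (i < j < l)%N -> (nth 0%R a j < nth 0%R a i)%R) ->
  let lam := piM l a in
  let c := iter `|nth 0%R a i|%N psi (take i a ++ drop i.+1 a) in
  (\sum_(x <- c) x = 0)%R /\ piM l.-1 c = Phi l lam.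
Proof.
move=> l_ge2 a_size a_sum0 i_lt le_max lt_max lam c.
by split; [apply: (@sum_psi_delete_at l) | apply: piM_delete_at].
Qed.
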